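(* Let $\mathbf P=(P,\leq,{}',0,1)$ be an orthogonal lub-complete poset. Then the following conditions are equivalent: (i) $\mathbf P$ is a Boolean algebra. (ii) $\mathbf P$ satisfies $x\leq y$ if and only if $x\rightarrow_C y=1$ for all $x,y\in P$. (iii) $\mathbf P$ is an orthocomplemented poset such that there exists a binary operator $\odot_C$ such that $x\odot_C y\leq_1 z$ if and only if $x\leq_2 y\rightarrow_C z$ for all $x,y,z\in P$.
   Context: $(P,\leq,{}',0,1)$ is a bounded poset with an antitone involution ${}'$; orthogonal means $x\leq y'$ implies $x\vee y$ exists; lub-complete means for every lower bound $x$ of a finite subset $M$ there is a maximal lower bound of $M$ above $x$; orthocomplemented means $x\vee x'=1$ for all $x$. For $A\subseteq P$, $U(A)$ is the set of upper bounds, $U(x,y)=U(\{x,y\})$, $\mathrm{Min}\,A$ is the set of minimal elements of $A$. The classical implication is $x\rightarrow_C y:=\mathrm{Min}\,U(x',y)$; $x\rightarrow_C y=1$ means it equals $\{1\}$. $\odot_C$ is a map $P^2\to 2^P$. For $A,B\subseteq P$: $A\leq_1 B$ means for every $x\in A$ there is $y\in B$ with $x\leq y$; $A\leq_2 B$ means for every $y\in B$ there is $x\in A$ with $x\leq y$. *)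

From Stdlib Require Import List.
Set Implicit Arguments.
Unset Strict Implicit.

Section Defs.
Variable P : Type.
Variable le : P -> P -> Prop.
Variable c : P -> P.
Variable zero one : P.

Definition pset := P -> Prop.

Definition bounded_poset_inv : Prop :=
  (forall x, le x x) /\
  (forall x y, le x y -> le y x -> x = y) /\
  (forall x y z, le x y -> le y z -> le x z) /\
  (forall x, le zero x) /\ (forall x, le x one) /\
  (forall x y, le x y -> le (c y) (c x)) /\
  (forall x, c (c x) = x).

Definition is_join (x y s : P) : Prop :=
  le x s /\ le y s /\ (forall u, le x u -> le y u -> le s u).

Definition is_meet (x y m : P) : Prop :=
  le m x /\ le m y /\ (forall u, le u x -> le u y -> le u m).

Definition orthogonal : Prop :=
  forall x y, le x (c y) -> exists s, is_join x y s.

Definition lower_bound (M : list P) (x : P) : Prop := forall m, In m M -> le x m.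

Definition lub_complete : Prop :=
  forall (M : list P) x, lower_bound M x ->
    exists w, lower_bound M w /\ le x w /\
      (forall v, lower_bound M v -> le w v -> v = w).

Definition orthocomplemented : Prop := forall x, is_join x (c x) one.

Definition boolean_algebra : Prop :=
  exists (join meet : P -> P -> P),
    (forall x y, is_join x y (join x y)) /\
    (forall x y, is_meet x y (meet x y)) /\
    (forall x y z, join x (meet y z) = meet (join x y) (join x z)) /\
    (forall x, join x (c x) = one) /\
    (forall x, meet x (c x) = zero).

Definition upper (A : pset) : pset := fun u => forall a, A a -> le a u.
Definition Min (A : pset) : pset := fun w => A w /\ (forall v, A v -> le v w -> v = w).
Definition pair (x y : P) : pset := fun a => a = x \/ a = y.
Definition single (x : P) : pset := fun a => a = x.

Definition implC (x y : P) : pset := Min (upper (pair (c x) y)).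

(* A = 1, i.e. A = {1} *)
Definition is_one (A : pset) : Prop := forall w, A w <-> w = one.

Definition leq1 (A B : pset) : Prop := forall x, A x -> exists y, B y /\ le x y.
Definition leq2 (A B : pset) : Prop := forall y, B y -> exists x, A x /\ le x y.

End Defs.

From Stdlib Require Import List ClassicalEpsilon.
Import ListNotations.

(* The pivot is the separation property "x ∧ y' = 0 implies x ≤ y", read with
   meets replaced by common lower bounds.  Condition (ii) forces it (then
   x' ∨ y = 1) and forces orthocomplementation (take a maximal lower bound of
   x, x' and dualise it into x →_C x).  With orthogonality and lub-completeness,
   separation turns maximal lower bounds into meets, and together with
   orthocomplementation it yields "v ⊥ x and v ≤ x ∨ t imply v ≤ t", which
   gives both distributivity and the residuation x ∧ y ≤ z iff x ≤ y' ∨ z, so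
   (iii) holds with x ⊙_C y := {x ∧ y}.  Conversely, from (iii) the set
   (y' ⊙_C x) lies below both y and y' when x →_C y = 1, hence below 0, and
   adjointness gives y' ≤ x →_C 0 = {x'}. *)

Set Implicit Arguments.
Unset Strict Implicit.

Lemma choice2 (A B C : Type) (R : A -> B -> C -> Prop) :
  (forall x y, exists z, R x y z) -> exists f, forall x y, R x y (f x y).
Proof.
  intros H.
  destruct (choice (fun x (g : B -> C) => forall y, R x y (g y))) as [f Hf].
  - intros x. apply choice, H.
  - exists f. exact Hf.
Qed.

Section OrthoPoset.

Variables (P : Type) (le : P -> P -> Prop) (c : P -> P) (zero one : P).
Hypothesis HP : bounded_poset_inv le c zero one.

Local Notation "x ≤ y" := (le x y) (at level 70).
Local Notation join := (is_join le).
Local Notation meet := (is_meet le).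

Definition disjoint (a b : P) : Prop := forall v, v ≤ a -> v ≤ b -> v = zero.

Definition separating : Prop := forall a b, disjoint a (c b) -> a ≤ b.

Definition le_iff_implC_one : Prop :=
  forall x y, x ≤ y <-> is_one one (implC le c x y).

Definition implC_residuated : Prop :=
  exists odot : P -> P -> pset P, forall x y z,
    leq1 le (odot x y) (single z) <-> leq2 le (single x) (implC le c y z).

Lemma le_refl x : x ≤ x.
Proof. destruct HP as [H _]. apply H. Qed.

Lemma le_antisym x y : x ≤ y -> y ≤ x -> x = y.
Proof. destruct HP as (_ & H & _). apply H. Qed.

Lemma le_trans x y z : x ≤ y -> y ≤ z -> x ≤ z.
Proof. destruct HP as (_ & _ & H & _). apply H. Qed.

Lemma le0x x : zero ≤ x.
Proof. destruct HP as (_ & _ & _ & H & _). apply H. Qed.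

Lemma lex1 x : x ≤ one.
Proof. destruct HP as (_ & _ & _ & _ & H & _). apply H. Qed.

Lemma compl_le x y : x ≤ y -> c y ≤ c x.
Proof. destruct HP as (_ & _ & _ & _ & _ & H & _). apply H. Qed.

Lemma complK x : c (c x) = x.
Proof. destruct HP as (_ & _ & _ & _ & _ & _ & H). apply H. Qed.

Lemma compl_le_compl x y : c y ≤ c x -> x ≤ y.
Proof. intros H. rewrite <- (complK x), <- (complK y). now apply compl_le. Qed.

Lemma le_compl_swap x y : x ≤ c y -> y ≤ c x.
Proof. intros H. rewrite <- (complK y). now apply compl_le. Qed.

Lemma compl_le_swap x y : c x ≤ y -> c y ≤ x.
Proof. intros H. rewrite <- (complK x). now apply compl_le. Qed.

Lemma le1_eq x : one ≤ x -> x = one.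
Proof. intros H. apply le_antisym; [apply lex1 | exact H]. Qed.

Lemma le0_eq x : x ≤ zero -> x = zero.
Proof. intros H. apply le_antisym; [exact H | apply le0x]. Qed.

Lemma compl_eq0 x : c x = zero -> x = one.
Proof. intros H. apply le1_eq, compl_le_compl. rewrite H. apply le0x. Qed.

Lemma compl_eq1 x : c x = one -> x = zero.
Proof. intros H. apply le0_eq, compl_le_compl. rewrite H. apply lex1. Qed.

Lemma upper_pair a b u : upper le (pair a b) u <-> a ≤ u /\ b ≤ u.
Proof.
  split.
  - intros H. split; apply H; [left | right]; reflexivity.
  - intros [Ha Hb] w [-> | ->]; assumption.
Qed.

Lemma lower_bound_pair a b v : lower_bound le [a; b] v <-> v ≤ a /\ v ≤ b.
Proof.
  split.
  - intros H. split; apply H; simpl; auto.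
  - intros [Ha Hb] m [<- | [<- | []]]; assumption.
Qed.

Lemma leq1_single (A : pset P) b : leq1 le A (single b) <-> forall a, A a -> a ≤ b.
Proof.
  split.
  - intros H a Ha. destruct (H a Ha) as [b' [-> Hab]]. exact Hab.
  - intros H a Ha. exists b. split; [reflexivity | auto].
Qed.

Lemma leq2_single a (B : pset P) : leq2 le (single a) B <-> forall w, B w -> a ≤ w.
Proof.
  split.
  - intros H w Hw. destruct (H w Hw) as [a' [-> Haw]]. exact Haw.
  - intros H w Hw. exists a. split; [reflexivity | auto].
Qed.

Lemma is_join_unique a b s t : join a b s -> join a b t -> s = t.
Proof. intros (Hs1 & Hs2 & Hs3) (Ht1 & Ht2 & Ht3). apply le_antisym; auto. Qed.

Lemma is_meet_unique a b s t : meet a b s -> meet a b t -> s = t.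
Proof. intros (Hs1 & Hs2 & Hs3) (Ht1 & Ht2 & Ht3). apply le_antisym; auto. Qed.

Lemma is_join_le_l a b s : join a b s -> a ≤ s.
Proof. intros H. apply H. Qed.

Lemma is_join_le_r a b s : join a b s -> b ≤ s.
Proof. intros H. apply H. Qed.

Lemma is_join_least a b s u : join a b s -> a ≤ u -> b ≤ u -> s ≤ u.
Proof. intros H. apply H. Qed.

Lemma is_meet_le_l a b m : meet a b m -> m ≤ a.
Proof. intros H. apply H. Qed.

Lemma is_meet_le_r a b m : meet a b m -> m ≤ b.
Proof. intros H. apply H. Qed.

Lemma is_meet_greatest a b m v : meet a b m -> v ≤ a -> v ≤ b -> v ≤ m.
Proof. intros H. apply H. Qed.

Lemma is_join_zero_r a : join a zero a.
Proof. split; [apply le_refl | split; [apply le0x | auto]]. Qed.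

Lemma is_meet_one_r a : meet a one a.
Proof. split; [apply le_refl | split; [apply lex1 | auto]]. Qed.

Lemma is_join_comm a b s : join a b s -> join b a s.
Proof. intros (H1 & H2 & H3). split; [| split]; auto. Qed.

Lemma is_join_compl_meet x y m : meet (c x) (c y) m -> join x y (c m).
Proof.
  intros (Hm1 & Hm2 & Hm3).
  split; [apply le_compl_swap, Hm1 | split; [apply le_compl_swap, Hm2 |]].
  intros u Hxu Hyu. apply compl_le_swap, Hm3; now apply compl_le.
Qed.

Lemma Min_upper_pair a b s :
  join a b s -> forall w, Min le (upper le (pair a b)) w <-> w = s.
Proof.
  intros (Hs1 & Hs2 & Hs3) w. split.
  - intros [Hu Hmin]. apply upper_pair in Hu as [Ha Hb].
    symmetry. apply Hmin; [apply upper_pair |]; auto.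
  - intros ->. split; [apply upper_pair; auto |].
    intros v Hv Hvs. apply upper_pair in Hv as [Ha Hb]. apply le_antisym; auto.
Qed.

Lemma orthocomplemented_disjoint :
  orthocomplemented le c one -> forall a, disjoint a (c a).
Proof.
  intros Hoc a v Hva Hvca. apply compl_eq1, le1_eq.
  apply (is_join_least (Hoc a)); [apply le_compl_swap | apply compl_le]; assumption.
Qed.

Lemma is_join_compl_one_of_le x y :
  orthocomplemented le c one -> x ≤ y -> join (c x) y one.
Proof.
  intros Hoc Hxy. split; [apply lex1 | split; [apply lex1 |]].
  intros u Hcxu Hyu. apply (is_join_least (Hoc x)); [exact (le_trans Hxy Hyu) | exact Hcxu].
Qed.

Lemma implC_one_of_disjoint a b : disjoint a (c b) -> is_one one (implC le c a b).
Proof.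
  assert (Hone : disjoint a (c b) -> forall w, upper le (pair (c a) b) w -> w = one).
  { intros Hab w Hw. apply upper_pair in Hw as [Ha Hb].
    apply compl_eq0, Hab; [apply compl_le_swap | apply compl_le]; assumption. }
  intros Hab w. split.
  - intros [Hw _]. exact (Hone Hab w Hw).
  - intros ->. split; [apply upper_pair; split; apply lex1 |].
    intros v Hv _. exact (Hone Hab v Hv).
Qed.

Lemma le_iff_implC_one_separating : le_iff_implC_one -> separating.
Proof. intros H a b Hab. apply H, implC_one_of_disjoint, Hab. Qed.

Lemma implC_compl_max_lower_bound x y w :
  lower_bound le [x; c y] w ->
  (forall v, lower_bound le [x; c y] v -> w ≤ v -> v = w) ->
  implC le c x y (c w).
Proof.
  intros Hw Hmax. apply lower_bound_pair in Hw as [Hwx Hwy]. split.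
  - apply upper_pair. split; [apply compl_le | apply le_compl_swap]; assumption.
  - intros v Hv Hvw. apply upper_pair in Hv as [Hv1 Hv2].
    rewrite <- (complK v). f_equal. apply Hmax.
    + apply lower_bound_pair. split; [apply compl_le_swap | apply compl_le]; assumption.
    + apply le_compl_swap, Hvw.
Qed.

Lemma le_iff_implC_one_orthocomplemented :
  lub_complete le -> le_iff_implC_one -> orthocomplemented le c one.
Proof.
  intros Hlub H x. split; [apply lex1 | split; [apply lex1 |]].
  intros u Hxu Hcxu.
  destruct (Hlub [x; c x] (c u)) as (w & Hw & Hcuw & Hmax).
  { apply lower_bound_pair. split; [apply compl_le_swap | apply compl_le]; assumption. }
  assert (Hw1 : c w = one).
  { apply (proj1 (H x x) (le_refl x) (c w)), implC_compl_max_lower_bound; assumption. }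
  rewrite <- Hw1. apply compl_le_swap, Hcuw.
Qed.

Section Separating.

Hypothesis Hoc : orthocomplemented le c one.
Hypothesis Hsep : separating.

Lemma is_meet_exists :
  orthogonal le c -> lub_complete le -> forall x y, exists m, meet x y m.
Proof.
  intros Horth Hlub x y.
  destruct (Hlub [x; y] zero) as (w & Hw & _ & Hmax); [intros m _; apply le0x |].
  pose proof Hw as [Hwx Hwy]%lower_bound_pair.
  exists w. split; [exact Hwx | split; [exact Hwy |]].
  intros v Hvx Hvy. apply Hsep. intros z Hzv Hzw.
  destruct (Horth z w Hzw) as (r & Hzr & Hwr & Hr).
  (* The join r of z and w is again a lower bound of x, y, so maximality gives z ≤ w. *)
  assert (Hrw : r = w).
  { apply Hmax; [| exact Hwr]. apply lower_bound_pair.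
    split; apply Hr; [exact (le_trans Hzv Hvx) | exact Hwx | exact (le_trans Hzv Hvy) | exact Hwy]. }
  subst r. exact (orthocomplemented_disjoint Hoc Hzr Hzw).
Qed.

Lemma is_join_exists :
  orthogonal le c -> lub_complete le -> forall x y, exists s, join x y s.
Proof.
  intros Horth Hlub x y. destruct (is_meet_exists Horth Hlub (c x) (c y)) as [m Hm].
  exists (c m). apply is_join_compl_meet, Hm.
Qed.

Lemma lattice_operations :
  orthogonal le c -> lub_complete le ->
  exists J M : P -> P -> P,
    (forall x y, join x y (J x y)) /\ (forall x y, meet x y (M x y)).
Proof.
  intros Horth Hlub.
  destruct (choice2 (is_join_exists Horth Hlub)) as [J HJ].
  destruct (choice2 (is_meet_exists Horth Hlub)) as [M HM].
  exists J, M. split; assumption.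
Qed.

Lemma le_of_disjoint_le_join x t s v : join x t s -> v ≤ c x -> v ≤ s -> v ≤ t.
Proof.
  intros Hs Hvx Hvs. apply Hsep. intros z Hzv Hzt.
  apply (orthocomplemented_disjoint Hoc (le_trans Hzv Hvs)).
  apply le_compl_swap, (is_join_least Hs).
  - apply le_compl_swap, (le_trans Hzv Hvx).
  - apply le_compl_swap, Hzt.
Qed.

Section Lattice.

Variables J M : P -> P -> P.
Hypothesis HJ : forall x y, join x y (J x y).
Hypothesis HM : forall x y, meet x y (M x y).

Lemma join_meet_distr x y z : J x (M y z) = M (J x y) (J x z).
Proof.
  apply le_antisym.
  - apply (is_meet_greatest (HM _ _)); apply (is_join_least (HJ _ _)).
    + exact (is_join_le_l (HJ x y)).
    + exact (le_trans (is_meet_le_l (HM y z)) (is_join_le_r (HJ x y))).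
    + exact (is_join_le_l (HJ x z)).
    + exact (le_trans (is_meet_le_r (HM y z)) (is_join_le_r (HJ x z))).
  - apply Hsep. intros v HvL HvR. apply le_compl_swap in HvR.
    assert (Hvx : v ≤ c x)
      by exact (le_compl_swap (le_trans (is_join_le_l (HJ _ _)) HvR)).
    assert (Hvm : v ≤ c (M y z))
      by exact (le_compl_swap (le_trans (is_join_le_r (HJ _ _)) HvR)).
    refine (orthocomplemented_disjoint Hoc _ Hvm).
    apply (is_meet_greatest (HM y z)); apply (le_of_disjoint_le_join (HJ x _) Hvx).
    + exact (le_trans HvL (is_meet_le_l (HM _ _))).
    + exact (le_trans HvL (is_meet_le_r (HM _ _))).
Qed.

Lemma meet_le_iff_le_implC x y z : M x y ≤ z <-> x ≤ J (c y) z.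
Proof.
  split.
  - intros Hmz. apply Hsep. intros v Hvx HvJ. apply le_compl_swap in HvJ.
    assert (Hvy : v ≤ y)
      by exact (compl_le_compl (le_trans (is_join_le_l (HJ _ _)) HvJ)).
    exact (orthocomplemented_disjoint Hoc
             (le_trans (is_meet_greatest (HM x y) Hvx Hvy) Hmz)
             (le_compl_swap (le_trans (is_join_le_r (HJ _ _)) HvJ))).
  - intros HxJ. apply Hsep. intros v Hvm Hvz.
    refine (orthocomplemented_disjoint Hoc _ Hvz).
    apply (le_of_disjoint_le_join (HJ (c y) z)).
    + rewrite complK. exact (le_trans Hvm (is_meet_le_r (HM x y))).
    + exact (le_trans Hvm (le_trans (is_meet_le_l (HM x y)) HxJ)).
Qed.

End Lattice.

Lemma separating_boolean_algebra :
  orthogonal le c -> lub_complete le -> boolean_algebra le c zero one.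
Proof.
  intros Horth Hlub.
  destruct (lattice_operations Horth Hlub) as (J & M & HJ & HM).
  exists J, M. split; [exact HJ | split; [exact HM | split; [| split]]].
  - apply join_meet_distr; assumption.
  - intros x. apply (is_join_unique (HJ x (c x)) (Hoc x)).
  - intros x.
    exact (orthocomplemented_disjoint Hoc (is_meet_le_l (HM x (c x))) (is_meet_le_r (HM x (c x)))).
Qed.

Lemma separating_implC_residuated :
  orthogonal le c -> lub_complete le -> implC_residuated.
Proof.
  intros Horth Hlub.
  destruct (lattice_operations Horth Hlub) as (J & M & HJ & HM).
  exists (fun x y => single (M x y)). intros x y z.
  rewrite leq1_single, leq2_single.
  assert (Hsingle : (forall a, single (M x y) a -> a ≤ z) <-> M x y ≤ z).
  { split; [intros H; apply H; reflexivity | intros H a ->; exact H]. }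
  assert (HimplC : (forall w, implC le c y z w -> x ≤ w) <-> x ≤ J (c y) z).
  { split.
    - intros H. apply H, (Min_upper_pair (HJ (c y) z)). reflexivity.
    - intros H w Hw. apply (Min_upper_pair (HJ (c y) z)) in Hw. subst w. exact H. }
  rewrite Hsingle, HimplC. apply meet_le_iff_le_implC; assumption.
Qed.

End Separating.

Lemma boolean_le_iff_implC_one : boolean_algebra le c zero one -> le_iff_implC_one.
Proof.
  intros (J & M & HJ & HM & Hdistr & Hjc & Hmc) x y.
  assert (HimplC : forall w, implC le c x y w <-> w = J (c x) y)
    by apply Min_upper_pair, HJ.
  assert (Hone : is_one one (implC le c x y) <-> J (c x) y = one).
  { split.
    - intros H. apply (H (J (c x) y)), HimplC. reflexivity.
    - intros H w. rewrite HimplC, H. reflexivity. }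
  rewrite Hone. split.
  - intros Hxy. apply le1_eq. rewrite <- (Hjc x).
    apply (is_join_least (HJ x (c x))).
    + exact (le_trans Hxy (is_join_le_r (HJ _ _))).
    + exact (is_join_le_l (HJ _ _)).
  - intros Hxy.
    (* y = y ∨ (x ∧ x') = (y ∨ x) ∧ (y ∨ x') = y ∨ x *)
    assert (Hy : y = J y x).
    { transitivity (J y (M x (c x))).
      - rewrite Hmc. exact (is_join_unique (is_join_zero_r y) (HJ y zero)).
      - rewrite Hdistr, (is_join_unique (HJ y (c x)) (is_join_comm (HJ (c x) y))), Hxy.
        exact (is_meet_unique (HM _ _) (is_meet_one_r _)). }
    rewrite Hy. exact (is_join_le_r (HJ y x)).
Qed.

Lemma implC_residuated_le_iff_implC_one :
  orthocomplemented le c one -> implC_residuated -> le_iff_implC_one.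
Proof.
  intros Hoc [odot Hodot] x y. split.
  - intros Hxy w. apply Min_upper_pair, is_join_compl_one_of_le; assumption.
  - intros Hone.
    assert (Hbelow : forall z, (forall w, implC le c x z w -> c y ≤ w) ->
                       forall a, odot (c y) x a -> a ≤ z).
    { intros z Hz. apply leq1_single, Hodot, leq2_single, Hz. }
    assert (Hzero : forall a, odot (c y) x a -> a ≤ zero).
    { intros a Ha. replace a with zero; [apply le_refl |]. symmetry.
      apply (orthocomplemented_disjoint Hoc (a := y)).
      - apply (Hbelow y); [| exact Ha].
        intros w Hw. apply Hone in Hw. rewrite Hw. apply lex1.
      - apply (Hbelow (c y)); [| exact Ha].
        intros w [Hw _]. apply upper_pair in Hw. apply Hw. }
    assert (Hcy : forall w, implC le c x zero w -> c y ≤ w).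
    { apply leq2_single, Hodot, leq1_single, Hzero. }
    apply compl_le_compl, Hcy, (Min_upper_pair (is_join_zero_r (c x))). reflexivity.
Qed.

End OrthoPoset.

Theorem theorem3 (P : Type) (le : P -> P -> Prop) (c : P -> P) (zero one : P)
  (HP : bounded_poset_inv le c zero one)
  (Horth : orthogonal le c)
  (Hlub : lub_complete le) :
  (boolean_algebra le c zero one <->
     (forall x y, le x y <-> is_one one (implC le c x y))) /\
  ((forall x y, le x y <-> is_one one (implC le c x y)) <->
     (orthocomplemented le c one /\
      exists odot : P -> P -> pset P,
        forall x y z,
          leq1 le (odot x y) (single z) <-> leq2 le (single x) (implC le c y z))).
Proof.
  pose proof (le_iff_implC_one_orthocomplemented HP Hlub) as Hoc.
  pose proof (le_iff_implC_one_separating HP) as Hsep.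
  split; split.
  - exact (boolean_le_iff_implC_one HP).
  - intros H. exact (separating_boolean_algebra HP (Hoc H) (Hsep H) Horth Hlub).
  - intros H. split; [exact (Hoc H) |].
    exact (separating_implC_residuated HP (Hoc H) (Hsep H) Horth Hlub).
  - intros [Hoc' Hres]. exact (implC_residuated_le_iff_implC_one HP Hoc' Hres).
Qed.
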